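(* A graph $G=(V,E)$ is $(1,1)$-well-covered if and only if it admits a partition $V=(S,K)$, with $S$ an independent set and $K$ a clique, such that either $|N(x)\cap S|=0$ for every $x\in K$, or $|N(x)\cap S|=1$ for every $x \in K$.
   Context: A $(1,1)$-partition of $G$ is a partition of $V(G)$ into an independent set and a clique (possibly empty). A graph is well-covered if all its maximal independent sets have the same cardinality; it is $(1,1)$-well-covered if it admits a $(1,1)$-partition and is well-covered. $N(x)$ denotes the set of neighbors of $x$. *)

(* A finite simple graph is a symmetric irreflexive relation
   e on a finType T (vertex set V = T). *)
From mathcomp Require Import all_boot.
Set Implicit Arguments. Unset Strict Implicit. Unset Printing Implicit Defensive.

Section Graphs.
Variables (T : finType) (e : rel T).

Definition nbhd (x : T) : {set T} := [set y | e x y].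

Definition independent (S : {set T}) : Prop :=
  forall x y, x \in S -> y \in S -> ~~ e x y.

Definition clique (K : {set T}) : Prop :=
  forall x y, x \in K -> y \in K -> x != y -> e x y.

Definition maximal_independent (S : {set T}) : Prop :=
  independent S /\ forall x, x \notin S -> ~ independent (x |: S).

Definition well_covered : Prop :=
  forall S1 S2, maximal_independent S1 -> maximal_independent S2 ->
    #|S1| = #|S2|.

Definition partition11 (S K : {set T}) : Prop :=
  S :|: K = setT /\ S :&: K = set0 /\ independent S /\ clique K.

Definition has_partition11 : Prop := exists S K, partition11 S K.

Definition well_covered11 : Prop := has_partition11 /\ well_covered.

End Graphs.

(* Fix a (1,1)-partition (S, K) and write d(x) = |N(x) ∩ S| for x in K.
   A maximal independent set meets the clique K in at most one vertex, so it
   is either S itself or, for some x in K, the set S_x = {x} ∪ (S \ N(x)),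
   of size |S| - d(x) + 1; and S is maximal exactly when d(x) > 0 for every
   x in K.  Hence the graph is well covered iff d is constant on K, with
   value 1 as soon as S is maximal, i.e. iff d ≡ 0 or d ≡ 1 on K. *)
From mathcomp Require Import all_boot.
From mathcomp Require Import zify.
Set Implicit Arguments. Unset Strict Implicit. Unset Printing Implicit Defensive.

Section Independence.
Variables (T : finType) (e : rel T).
Hypotheses (e_sym : symmetric e) (e_irr : irreflexive e).

Lemma independentS (A B : {set T}) :
  A \subset B -> independent e B -> independent e A.
Proof. by move=> /subsetP AB indB x y /AB xB /AB yB; exact: indB. Qed.

Lemma independentU1P (x : T) (A : {set T}) :
  independent e (x |: A) <-> independent e A /\ forall y, y \in A -> ~~ e x y.
Proof.
split=> [indxA | [indA xA]].
  split=> [y z yA zA | y yA]; apply: indxA; by rewrite !inE ?eqxx ?yA ?zA ?orbT.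
move=> y z; rewrite !inE => /predU1P[->|yA] /predU1P[->|zA].
- by rewrite e_irr.
- exact: xA.
- by rewrite e_sym xA.
- exact: indA.
Qed.

Lemma maximal_independent_mem (I : {set T}) (y : T) :
  maximal_independent e I -> (forall z, z \in I -> ~~ e y z) -> y \in I.
Proof.
move=> [indI maxI] yI; apply/negPn/negP => /maxI; apply.
exact/independentU1P.
Qed.

End Independence.

Section Partition11.
Variables (T : finType) (e : rel T).
Hypotheses (e_sym : symmetric e) (e_irr : irreflexive e).
Variables (S K : {set T}).
Hypothesis SK : partition11 e S K.

Local Notation deg x := #|nbhd e x :&: S|.

Lemma partition11_memK (x : T) : x \notin S -> x \in K.
Proof.
move=> xS; have: x \in S :|: K by rewrite SK.1 inE.
by rewrite inE (negbTE xS).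
Qed.

Lemma partition11_notinS (x : T) : x \in K -> x \notin S.
Proof.
move=> xK; apply/negP => xS; have: x \in S :&: K by rewrite inE xS xK.
by rewrite SK.2.1 inE.
Qed.

Lemma leq_deg_card (x : T) : deg x <= #|S|.
Proof. by rewrite subset_leq_card // subsetIr. Qed.

Definition exchange (x : T) : {set T} := x |: (S :\: nbhd e x).

Lemma card_exchange (x : T) : x \in K -> #|exchange x| = (#|S| - deg x).+1.
Proof.
move=> /partition11_notinS xS.
by rewrite cardsU1 cardsD setIC !inE (negbTE xS) andbF.
Qed.

Lemma maximal_exchange (x : T) : x \in K -> maximal_independent e (exchange x).
Proof.
move=> xK; split.
  apply/(independentU1P e_sym e_irr); split.
    by apply: independentS SK.2.2.1; apply: subsetDl.
  by move=> y; rewrite !inE => /andP[].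
move=> y; rewrite !inE negb_or => /andP[yx yS] /(independentU1P e_sym e_irr)[_ xy].
have /negP := xy x (setU11 _ _); apply.
have [yS'|/partition11_memK yK] := boolP (y \in S).
  by move: yS; rewrite yS' andbT negbK e_sym.
exact: SK.2.2.2.
Qed.

Lemma maximalS_deg_gt0 : maximal_independent e S <-> forall x, x \in K -> 0 < deg x.
Proof.
split=> [Smax x xK | deg_pos].
  rewrite lt0n cards_eq0; apply/negP => /eqP degx0.
  have /negP := partition11_notinS xK; apply.
  apply: (maximal_independent_mem e_sym e_irr Smax).
  move=> z zS; apply/negP => exz.
  have: z \in nbhd e x :&: S by rewrite !inE exz zS.
  by rewrite degx0 inE.
split; first exact: SK.2.2.1.
move=> x /partition11_memK /deg_pos /card_gt0P[z]; rewrite !inE => /andP[exz zS].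
by move=> /(independentU1P e_sym e_irr)[_ /(_ z zS)]; rewrite exz.
Qed.

Lemma maximal_independent_partition11 (I : {set T}) :
  maximal_independent e I -> I = S \/ exists2 x, x \in K & I = exchange x.
Proof.
move=> Imax; have [indI _] := Imax.
have [IK0 | [x]] := set_0Vmem (I :&: K).
  have IS : I \subset S.
    apply/subsetP => y yI; apply/negPn/negP => /partition11_memK yK.
    have: y \in I :&: K by rewrite inE yI yK.
    by rewrite IK0 inE.
  left; apply/eqP; rewrite eqEsubset IS; apply/subsetP => y yS.
  apply: (maximal_independent_mem e_sym e_irr Imax) => z zI.
  exact: SK.2.2.1 yS (subsetP IS z zI).
rewrite inE => /andP[xI xK]; right; exists x => //.
have IxS z : z \in I -> z != x -> z \in S.
  move=> zI zx; apply/negPn/negP => /partition11_memK zK.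
  by have := indI z x zI xI; rewrite (SK.2.2.2 z x zK xK zx).
apply/setP => y; rewrite !inE; have [->|yx] := eqVneq y x; first by rewrite xI.
apply/idP/andP => [yI | [exy yS]].
  by split; [exact: indI | exact: IxS].
apply: (maximal_independent_mem e_sym e_irr Imax) => z zI.
have [->|zx] := eqVneq z x; first by rewrite e_sym.
exact: SK.2.2.1 yS (IxS z zI zx).
Qed.

Lemma well_covered_deg_eq (x y : T) :
  well_covered e -> x \in K -> y \in K -> deg x = deg y.
Proof.
move=> wc xK yK.
have := wc _ _ (maximal_exchange xK) (maximal_exchange yK).
rewrite !card_exchange // => -[].
by have := leq_deg_card x; have := leq_deg_card y; lia.
Qed.

Lemma well_covered_deg1 (x : T) :
  well_covered e -> maximal_independent e S -> x \in K -> deg x = 1.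
Proof.
move=> wc Smax xK; have := wc _ _ Smax (maximal_exchange xK).
by rewrite card_exchange //; have := leq_deg_card x; lia.
Qed.

Lemma deg1_well_covered :
  (forall x, x \in K -> deg x = 1) -> well_covered e.
Proof.
move=> deg1.
suff cardS I : maximal_independent e I -> #|I| = #|S|.
  by move=> I J /cardS -> /cardS ->.
case/maximal_independent_partition11 => [-> // | [x xK ->]].
by rewrite card_exchange //; have := leq_deg_card x; rewrite deg1 //; lia.
Qed.

Lemma deg0_well_covered :
  (forall x, x \in K -> deg x = 0) -> well_covered e.
Proof.
move=> deg0.
suff [c cardc] : exists c, forall I, maximal_independent e I -> #|I| = c.
  by move=> I J /cardc -> /cardc ->.
have [K0 | [x0 x0K]] := set_0Vmem K.
  exists #|S| => I /maximal_independent_partition11[-> // | [x]].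
  by rewrite K0 inE.
exists #|S|.+1 => I Imax.
have [IS | [x xK ->]] := maximal_independent_partition11 Imax.
  by move: Imax; rewrite IS => /maximalS_deg_gt0 /(_ x0 x0K); rewrite deg0.
by rewrite card_exchange // deg0 // subn0.
Qed.

End Partition11.

Theorem lemma3 (T : finType) (e : rel T)
    (e_sym : symmetric e) (e_irr : irreflexive e) :
  well_covered11 e <->
  exists S K : {set T}, partition11 e S K /\
    ((forall x, x \in K -> #|nbhd e x :&: S| = 0) \/
     (forall x, x \in K -> #|nbhd e x :&: S| = 1)).
Proof.
split=> [[[S [K SK]] wc] | [S [K [SK deg01]]]].
  exists S, K; split=> //.
  have [/forall_inP deg0 | ] := boolP [forall x in K, #|nbhd e x :&: S| == 0].
    by left=> x /deg0 /eqP.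
  rewrite negb_forall_in => /exists_inP[x0 x0K degx0]; right.
  have Smax : maximal_independent e S.
    apply/(maximalS_deg_gt0 e_sym e_irr SK) => x xK.
    by rewrite (well_covered_deg_eq e_sym e_irr SK wc xK x0K) lt0n.
  by move=> x; apply: (well_covered_deg1 e_sym e_irr SK wc Smax).
split; first by exists S, K.
case: deg01 => [deg0 | deg1].
  exact: (deg0_well_covered e_sym e_irr SK).
exact: (deg1_well_covered e_sym e_irr SK).
Qed.
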